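(* Let $Q$ be a Foulis quantale, and for $t\in Q$ put $t^\perp=[t^*]$. On $Q$ define the relation $s\le t$ iff $s=t\cdot s$. Then for all $t,r\in Q$ and all $k\in[Q]=\{[t]\mid t\in Q\}$: ( * ) $r^*\cdot t=0 \iff t=[r^*]\cdot t$; ( ** ) $t\le r$ implies $r^\perp\le t^\perp$, and $k^{\perp\perp}=k$; ( *** ) $t\le r^\perp \iff r\le t^\perp$. Moreover, $[Q]$ is a complete orthomodular lattice with the following structure: order $k_1\le k_2$ iff $k_1=k_2\cdot k_1$; top element $1=[0]$; orthocomplement $k^\perp=[k]$; meet $k_1\wedge k_2=\big(k_1\cdot[[k_2]\cdot k_1]\big)^{\perp\perp}$; and for any $S\subseteq[Q]$, join $\bigvee S=[[\bigsqcup S]]$, where $\bigsqcup$ denotes the join in the complete lattice $Q$.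
   Context: A quantale is a complete lattice $Q$ (join $\bigsqcup$, order $\sqsubseteq$) with an associative multiplication distributing over arbitrary joins on both sides; unital if it has a two-sided unit $e$; involutive if equipped with a join-preserving semigroup involution $*$ (so $a^{**}=a$, $(ab)^*=b^*a^*$). A Foulis quantale is a unital involutive quantale $Q$ with an endomap $[-]\colon Q\to Q$ such that: (a) $[s]\cdot[s]=[s]=[s]^*$ for all $s$; (b) $[e]=0$, where $0$ is the least element of $Q$; (c) for all $s,x\in Q$: $s\cdot x=0$ iff there exists $y\in Q$ with $x=[s]\cdot y$. An orthomodular lattice is a bounded lattice with an involutive order-reversing map $x\mapsto x^\perp$ with $x\wedge x^\perp=0$ such that $x\le y$ implies $y=x\vee(x^\perp\wedge y)$. *)

Set Implicit Arguments.

Record FoulisQuantale := {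
  carrier :> Type;
  qle : carrier -> carrier -> Prop;
  qjoin : (carrier -> Prop) -> carrier;
  qmul : carrier -> carrier -> carrier;
  qunit : carrier;
  qstar : carrier -> carrier;
  br : carrier -> carrier;

  qle_refl : forall a, qle a a;
  qle_antisym : forall a b, qle a b -> qle b a -> a = b;
  qle_trans : forall a b c, qle a b -> qle b c -> qle a c;
  qjoin_ub : forall (S : carrier -> Prop) a, S a -> qle a (qjoin S);
  qjoin_least : forall (S : carrier -> Prop) b,
      (forall a, S a -> qle a b) -> qle (qjoin S) b;

  qmulA : forall a b c, qmul a (qmul b c) = qmul (qmul a b) c;
  qmul_joinr : forall a (S : carrier -> Prop),
      qmul a (qjoin S) = qjoin (fun y => exists x, S x /\ y = qmul a x);
  qmul_joinl : forall a (S : carrier -> Prop),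
      qmul (qjoin S) a = qjoin (fun y => exists x, S x /\ y = qmul x a);

  qmul1l : forall a, qmul qunit a = a;
  qmul1r : forall a, qmul a qunit = a;

  qstarK : forall a, qstar (qstar a) = a;
  qstarM : forall a b, qstar (qmul a b) = qmul (qstar b) (qstar a);
  qstar_join : forall (S : carrier -> Prop),
      qstar (qjoin S) = qjoin (fun y => exists x, S x /\ y = qstar x);

  (* Foulis axioms; the least element 0 is the join of the empty set *)
  br_idem : forall s, qmul (br s) (br s) = br s;
  br_star : forall s, qstar (br s) = br s;
  br_unit : br qunit = qjoin (fun _ => False);
  br_ann : forall s x,
      qmul s x = qjoin (fun _ => False) <-> exists y, x = qmul (br s) y
}.

Section Derived.
Context {Q : FoulisQuantale}.

Definition qbot : carrier Q := qjoin Q (fun _ => False).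

Definition qperp (t : Q) : Q := br Q (qstar Q t).

Definition qrel (s t : Q) : Prop := s = qmul Q t s.

Definition inBr (k : Q) : Prop := exists t, k = br Q t.

Definition brMeet (k1 k2 : Q) : Q :=
  qperp (qperp (qmul Q k1 (br Q (qmul Q (br Q k2) k1)))).

Definition brJoin (S : Q -> Prop) : Q := br Q (br Q (qjoin Q S)).

Definition brJoin2 (k1 k2 : Q) : Q := brJoin (fun x => x = k1 \/ x = k2).

End Derived.

From Stdlib Require Import Setoid.

(* The elements of [Q] are projections (self-adjoint idempotents), and on them
   [s <= t iff s = t s] is the usual order of projections.  Everything rests on
   [[s] x = x <-> s x = 0]: it makes [-] antitone and shows that
   [lsupp a = [[a^*]]] is the least projection [p] with [p a = a].  The meet of
   [k1] and [k2] is the support of [k1 [[k2] k1]], an element fixed by exactly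
   the projections below both, and the join of [S] is the support of the
   self-adjoint element [⊔ S].  For orthomodularity, with [x <= y] and
   [z = [x] ∧ y], the support of [a = y [x ∨ z]] lies below [y] and [[x]],
   hence below [z]; since [z [x ∨ z] = 0] this forces [a = 0], i.e.
   [y <= x ∨ z]. *)

Section FoulisQuantaleTheory.
Variable Q : FoulisQuantale.

Local Infix "⊑" := (qle Q) (at level 70).
Local Infix "*" := (qmul Q).
Local Notation "a ^*" := (qstar Q a) (at level 2, format "a ^*").
Local Notation "[ a ]" := (br Q a).
Local Notation bot := (@qbot Q).
Local Notation e := (qunit Q).

Definition lsupp (a : Q) : Q := [[a^*]].

Lemma le_qbot (a : Q) : a ⊑ bot -> a = bot.
Proof.
  intro H. apply (qle_antisym Q); [exact H |].
  apply (qjoin_least Q). intros _ [].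
Qed.

Lemma qjoin_of_empty (P : Q -> Prop) : (forall y, ~ P y) -> qjoin Q P = bot.
Proof.
  intro HP. apply le_qbot, (qjoin_least Q). intros y Hy. destruct (HP y Hy).
Qed.

Lemma qmul0l (a : Q) : bot * a = bot.
Proof.
  unfold qbot at 1. rewrite (qmul_joinl Q). apply qjoin_of_empty. firstorder.
Qed.

Lemma qmul0r (a : Q) : a * bot = bot.
Proof.
  unfold qbot at 1. rewrite (qmul_joinr Q). apply qjoin_of_empty. firstorder.
Qed.

Lemma qstar0 : bot^* = bot.
Proof.
  unfold qbot at 1. rewrite (qstar_join Q). apply qjoin_of_empty. firstorder.
Qed.

Lemma qmul_eq0_star (a b : Q) : a * b = bot <-> b^* * a^* = bot.
Proof.
  rewrite <- (qstarM Q). split; intro H.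
  - rewrite H. exact qstar0.
  - rewrite <- (qstarK Q (a * b)), H. exact qstar0.
Qed.

Lemma qmul_monol (a c d : Q) : a ⊑ c -> a * d ⊑ c * d.
Proof.
  intro Hac.
  assert (Hjoin : qjoin Q (fun y => y = a \/ y = c) = c).
  { apply (qle_antisym Q).
    - apply (qjoin_least Q). intros y [-> | ->]; [exact Hac | apply (qle_refl Q)].
    - apply (qjoin_ub Q). now right. }
  rewrite <- Hjoin at 1. rewrite (qmul_joinl Q).
  apply (qjoin_ub Q). exists a. auto.
Qed.

Lemma qrel_trans (s t r : Q) : qrel s t -> qrel t r -> qrel s r.
Proof.
  unfold qrel. intros Hst Htr. rewrite Hst at 2. rewrite (qmulA Q), <- Htr. exact Hst.
Qed.

Lemma qrel_qbot (k : Q) : qrel bot k.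
Proof. symmetry. apply qmul0r. Qed.

Lemma qrel_qjoin (S : Q -> Prop) (p : Q) :
  (forall x, S x -> qrel x p) -> qrel (qjoin Q S) p.
Proof.
  intro HS. unfold qrel. rewrite (qmul_joinr Q).
  apply (qle_antisym Q); apply (qjoin_least Q).
  - intros x Hx. apply (qjoin_ub Q). exists x. split; [exact Hx | apply HS, Hx].
  - intros y [x [Hx ->]]. rewrite <- (HS x Hx). apply (qjoin_ub Q), Hx.
Qed.

Lemma qstar_qjoin_fixed (S : Q -> Prop) :
  (forall x, S x -> x^* = x) -> (qjoin Q S)^* = qjoin Q S.
Proof.
  intro HS. rewrite (qstar_join Q).
  apply (qle_antisym Q); apply (qjoin_least Q).
  - intros y [x [Hx ->]]. rewrite (HS x Hx). apply (qjoin_ub Q), Hx.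
  - intros x Hx. apply (qjoin_ub Q). exists x. split; [exact Hx | symmetry; apply HS, Hx].
Qed.

Lemma qmul_br (s : Q) : s * [s] = bot.
Proof. apply (br_ann Q). exists e. symmetry. apply (qmul1r Q). Qed.

Lemma qrel_brE (s x : Q) : qrel x [s] <-> s * x = bot.
Proof.
  unfold qrel. split.
  - intro Hx. rewrite Hx, (qmulA Q), qmul_br. apply qmul0l.
  - intros Hsx. apply (br_ann Q) in Hsx. destruct Hsx as [y ->].
    now rewrite (qmulA Q), (br_idem Q).
Qed.

Lemma br_mul_star (s : Q) : [s] * s^* = bot.
Proof. rewrite <- (br_star Q s). apply -> qmul_eq0_star. apply qmul_br. Qed.

Lemma qrel_lsupp (a : Q) : qrel a (lsupp a).
Proof. apply qrel_brE. rewrite <- (qstarK Q a) at 2. apply br_mul_star. Qed.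

Lemma qmul_br_qjoin (S : Q -> Prop) (x : Q) : S x -> x * [qjoin Q S] = bot.
Proof.
  intro Hx. apply le_qbot. rewrite <- (qmul_br (qjoin Q S)).
  apply qmul_monol, (qjoin_ub Q), Hx.
Qed.

Lemma qperp_antitone {t r : Q} : qrel t r -> qrel (qperp r) (qperp t).
Proof.
  unfold qperp, qrel at 1. intro Htr. apply qrel_brE.
  assert (Hstar : t^* = t^* * r^*) by (rewrite Htr at 1; apply (qstarM Q)).
  rewrite Hstar, <- (qmulA Q), qmul_br. apply qmul0r.
Qed.

Lemma qrel_qperp_sym (t r : Q) : qrel t (qperp r) <-> qrel r (qperp t).
Proof.
  unfold qperp. rewrite !qrel_brE, qmul_eq0_star, (qstarK Q). reflexivity.
Qed.

Lemma qrel_br_qbot (k : Q) : qrel k [bot].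
Proof. apply qrel_brE, qmul0l. Qed.

Lemma br_qbot : [bot] = e.
Proof. rewrite <- (qmul1r Q [bot]). symmetry. apply qrel_br_qbot. Qed.

Lemma inBr_br (s : Q) : inBr [s].
Proof. exists s. reflexivity. Qed.

Lemma inBr_qbot : inBr bot.
Proof. exists e. symmetry. apply (br_unit Q). Qed.

Lemma inBr_idem {k : Q} : inBr k -> k * k = k.
Proof. intros [t ->]. apply (br_idem Q). Qed.

Lemma inBr_star {k : Q} : inBr k -> k^* = k.
Proof. intros [t ->]. apply (br_star Q). Qed.

Lemma qrel_refl_inBr (k : Q) : inBr k -> qrel k k.
Proof. intro Hk. symmetry. apply inBr_idem, Hk. Qed.

Lemma qrel_inBr_comm {p q : Q} : inBr p -> inBr q -> qrel q p -> q = q * p.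
Proof.
  intros Hp Hq Hqp. red in Hqp. rewrite <- (inBr_star Hq) at 1. rewrite Hqp at 1.
  now rewrite (qstarM Q), (inBr_star Hp), (inBr_star Hq).
Qed.

Lemma qrel_antisym_inBr (k1 k2 : Q) :
  inBr k1 -> inBr k2 -> qrel k1 k2 -> qrel k2 k1 -> k1 = k2.
Proof.
  intros H1 H2 H12 H21. rewrite (qrel_inBr_comm H2 H1 H12). exact (eq_sym H21).
Qed.

Lemma br_mul_inBr {k : Q} : inBr k -> [k] * k = bot.
Proof. intro Hk. rewrite <- (inBr_star Hk) at 2. apply br_mul_star. Qed.

Lemma br_antitone {k1 k2 : Q} : inBr k1 -> inBr k2 -> qrel k1 k2 -> qrel [k2] [k1].
Proof.
  intros H1 H2 H12. generalize (qperp_antitone H12). unfold qperp.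
  now rewrite (inBr_star H1), (inBr_star H2).
Qed.

Lemma br_brK (t : Q) : [[[t]]] = [t].
Proof.
  apply qrel_antisym_inBr; try apply inBr_br.
  - apply qrel_brE.
    assert (Ht : t = t * [[t]]).
    { generalize (qrel_lsupp t^*). unfold qrel, lsupp. rewrite (qstarK Q). intro Hs.
      rewrite <- (qstarK Q t) at 1. rewrite Hs at 1.
      now rewrite (qstarM Q), (br_star Q), (qstarK Q). }
    rewrite Ht at 1. rewrite <- (qmulA Q), qmul_br. apply qmul0r.
  - apply qrel_brE. rewrite <- (br_star Q t) at 2. apply br_mul_star.
Qed.

Lemma brK {k : Q} : inBr k -> [[k]] = k.
Proof. intros [t ->]. apply br_brK. Qed.

Lemma qperpK {k : Q} : inBr k -> qperp (qperp k) = k.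
Proof. intro Hk. unfold qperp. rewrite (inBr_star Hk), (br_star Q). apply brK, Hk. Qed.

Lemma lsupp_least {p a : Q} : inBr p -> qrel a p -> qrel (lsupp a) p.
Proof.
  intros Hp Hap.
  assert (Hbr : qrel [p] [a^*]).
  { apply qrel_brE. apply <- qmul_eq0_star. rewrite (br_star Q), (qstarK Q), Hap.
    rewrite (qmulA Q), (br_mul_inBr Hp). apply qmul0l. }
  generalize (br_antitone (inBr_br _) (inBr_br _) Hbr). now rewrite (brK Hp).
Qed.

Lemma brMeetE (k1 k2 : Q) : brMeet k1 k2 = lsupp (k1 * [[k2] * k1]).
Proof. unfold brMeet, qperp, lsupp. now rewrite (br_star Q). Qed.

Lemma brMeet_glb {k1 k2 : Q} : inBr k1 -> inBr k2 ->
  inBr (brMeet k1 k2) /\ qrel (brMeet k1 k2) k1 /\ qrel (brMeet k1 k2) k2 /\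
  (forall m : Q, inBr m -> qrel m k1 -> qrel m k2 -> qrel m (brMeet k1 k2)).
Proof.
  intros H1 H2. rewrite brMeetE. set (a := k1 * [[k2] * k1]).
  assert (Ha1 : qrel a k1) by (unfold qrel, a; now rewrite (qmulA Q), (inBr_idem H1)).
  assert (Ha2 : qrel a k2).
  { rewrite <- (brK H2). apply qrel_brE. unfold a. rewrite (qmulA Q). apply qmul_br. }
  split; [apply inBr_br | split; [| split]].
  - apply lsupp_least; assumption.
  - apply lsupp_least; assumption.
  - intros m Hm Hm1 Hm2. apply qrel_trans with a; [| apply qrel_lsupp].
    assert (Hfix : qrel m [[k2] * k1]).
    { apply qrel_brE. rewrite <- (qmulA Q), <- Hm1, Hm2, (qmulA Q), (br_mul_inBr H2).
      apply qmul0l. }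
    unfold qrel, a. rewrite <- (qmulA Q), <- Hfix. exact Hm1.
Qed.

Lemma brMeet_br_qbot (k : Q) : inBr k -> brMeet k [k] = bot.
Proof.
  intro Hk. rewrite brMeetE, (brK Hk), (inBr_idem Hk), qmul_br.
  unfold lsupp. now rewrite qstar0, br_qbot, (br_unit Q).
Qed.

Lemma brJoin_lub (S : Q -> Prop) : (forall x, S x -> inBr x) ->
  inBr (brJoin S) /\ (forall x, S x -> qrel x (brJoin S)) /\
  (forall m : Q, inBr m -> (forall x, S x -> qrel x m) -> qrel (brJoin S) m).
Proof.
  intro HS. unfold brJoin. split; [apply inBr_br | split].
  - intros x Hx. apply qrel_brE.
    rewrite <- (br_star Q (qjoin Q S)), <- (inBr_star (HS x Hx)).
    apply -> qmul_eq0_star. apply qmul_br_qjoin, Hx.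
  - intros m Hm Hle.
    rewrite <- (qstar_qjoin_fixed S (fun x Hx => inBr_star (HS x Hx))).
    apply (lsupp_least Hm), qrel_qjoin, Hle.
Qed.

Lemma orthomodular (x y : Q) : inBr x -> inBr y -> qrel x y ->
  y = brJoin2 x (brMeet [x] y).
Proof.
  intros Hx Hy Hxy. set (z := brMeet [x] y).
  destruct (brMeet_glb (inBr_br x) Hy) as [Hz [_ [Hzy Hz_glb]]].
  fold z in Hz, Hzy, Hz_glb.
  set (S := fun v => v = x \/ v = z).
  destruct (brJoin_lub S) as [Hw [_ Hw_lub]]; [intros v [-> | ->]; assumption |].
  unfold brJoin2. fold S. apply qrel_antisym_inBr; try assumption.
  - unfold brJoin. set (J := qjoin Q S). set (a := y * [J]).
    assert (Ha_z : qrel a z).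
    { apply qrel_trans with (lsupp a); [apply qrel_lsupp |].
      apply Hz_glb; [apply inBr_br | apply lsupp_least; try apply inBr_br |].
      - apply qrel_brE. unfold a. rewrite (qmulA Q), <- (qrel_inBr_comm Hy Hx Hxy).
        apply qmul_br_qjoin. now left.
      - apply lsupp_least; [exact Hy |]. unfold qrel, a.
        now rewrite (qmulA Q), (inBr_idem Hy). }
    assert (Ha : a = bot).
    { red in Ha_z. rewrite Ha_z. unfold a. rewrite (qmulA Q), <- (qrel_inBr_comm Hy Hz Hzy).
      apply qmul_br_qjoin. now right. }
    apply qrel_brE. rewrite <- (inBr_star Hy), <- (br_star Q J). apply -> qmul_eq0_star. exact Ha.
  - apply Hw_lub; [exact Hy |]. intros v [-> | ->]; assumption.
Qed.

End FoulisQuantaleTheory.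

Theorem mainTheorem5 (Q : FoulisQuantale) :
  (* ( * ) *)
  (forall t r : Q,
      qmul Q (qstar Q r) t = (@qbot Q) <-> t = qmul Q (br Q (qstar Q r)) t) /\
  (* ( ** ) *)
  (forall t r : Q, qrel t r -> qrel (qperp r) (qperp t)) /\
  (forall k : Q, inBr k -> qperp (qperp k) = k) /\
  (* ( *** ) *)
  (forall t r : Q, qrel t (qperp r) <-> qrel r (qperp t)) /\
  (forall k : Q, inBr k -> qrel k k) /\
  (forall k1 k2 : Q, inBr k1 -> inBr k2 -> qrel k1 k2 -> qrel k2 k1 -> k1 = k2) /\
  (forall k1 k2 k3 : Q, inBr k1 -> inBr k2 -> inBr k3 ->
      qrel k1 k2 -> qrel k2 k3 -> qrel k1 k3) /\
  (* top 1 = [0], bottom 0 *)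
  inBr (br Q (@qbot Q)) /\
  (forall k : Q, inBr k -> qrel k (br Q (@qbot Q))) /\
  inBr (@qbot Q) /\
  (forall k : Q, inBr k -> qrel (@qbot Q) k) /\
  (* orthocomplement k^⊥ = [k] *)
  (forall k : Q, inBr k -> inBr (br Q k)) /\
  (forall k : Q, inBr k -> br Q (br Q k) = k) /\
  (forall k1 k2 : Q, inBr k1 -> inBr k2 -> qrel k1 k2 -> qrel (br Q k2) (br Q k1)) /\
  (forall k : Q, inBr k -> brMeet k (br Q k) = (@qbot Q)) /\
  (forall k1 k2 : Q, inBr k1 -> inBr k2 ->
      inBr (brMeet k1 k2) /\ qrel (brMeet k1 k2) k1 /\ qrel (brMeet k1 k2) k2 /\
      (forall m : Q, inBr m -> qrel m k1 -> qrel m k2 -> qrel m (brMeet k1 k2))) /\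
  (forall S : Q -> Prop, (forall x : Q, S x -> inBr x) ->
      inBr (brJoin S) /\ (forall x : Q, S x -> qrel x (brJoin S)) /\
      (forall m : Q, inBr m -> (forall x : Q, S x -> qrel x m) -> qrel (brJoin S) m)) /\
  (forall x y : Q, inBr x -> inBr y -> qrel x y ->
      y = brJoin2 x (brMeet (br Q x) y)).
Proof.
  exact (conj (fun t r => iff_sym (qrel_brE Q (qstar Q r) t))
        (conj (@qperp_antitone Q)
        (conj (@qperpK Q)
        (conj (@qrel_qperp_sym Q)
        (conj (@qrel_refl_inBr Q)
        (conj (@qrel_antisym_inBr Q)
        (conj (fun k1 k2 k3 _ _ _ => @qrel_trans Q k1 k2 k3)
        (conj (inBr_br Q qbot)
        (conj (fun k _ => qrel_br_qbot Q k)
        (conj (inBr_qbot Q)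
        (conj (fun k _ => qrel_qbot Q k)
        (conj (fun k _ => inBr_br Q k)
        (conj (@brK Q)
        (conj (@br_antitone Q)
        (conj (@brMeet_br_qbot Q)
        (conj (@brMeet_glb Q)
        (conj (@brJoin_lub Q)
              (@orthomodular Q)))))))))))))))))).
Qed.
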